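(* Let $G$ be a finite group of odd order. Then $\Gamma_{G,H}$ admits a perfect code for every normal subgroup $H$ of $G$.
   Context: For a normal subgroup $H$ of a finite group $G$ with identity $e$, the subgroup sum graph $\Gamma_{G,H}$ is the simple undirected graph with vertex set $G$ in which distinct vertices $x,y$ are adjacent if and only if $xy\in H\setminus\{e\}$. A perfect code in a graph is a set $C$ of vertices that is independent and such that every vertex not in $C$ is adjacent to exactly one vertex of $C$. *)

From mathcomp Require Import all_boot all_fingroup.
Set Implicit Arguments. Unset Strict Implicit. Unset Printing Implicit Defensive.
Local Open Scope group_scope.

(* Subgroup sum graph Gamma_{G,H} on vertex set G (a finite group, here the
   full group [set: gT]): distinct x, y adjacent iff x*y \in H \ {1}. *)
Definition ssg_adj (gT : finGroupType) (H : {set gT}) (x y : gT) : bool :=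
  (x != y) && (x * y \in H^#).

Definition perfect_code (T : finType) (V : {set T}) (e : T -> T -> bool)
    (C : {set T}) : Prop :=
  [/\ C \subset V,
      (forall x y, x \in C -> y \in C -> ~~ e x y) &
      (forall x, x \in V -> x \notin C -> #|[set c in C | e x c]| = 1%N)].

(* Vertices x and y are adjacent iff y lies in the left coset x^-1 H and
   differs from x and x^-1. Hence any C inside G that is closed under inversion
   and meets every left coset of H in G exactly once is a perfect code: the only
   possible neighbour of x in C is the element c of C in x^-1 H, and c = x^-1 iff
   x is in C. Such a symmetric transversal exists when G/H has odd order: then
   x^2 in H forces x in H, so a nontrivial coset xH differs from x^-1 H, and one
   picks an element p of xH u x^-1 H and keeps p and p^-1 (keeping 1 for H). *)

From mathcomp Require Import all_boot all_fingroup all_solvable.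
Local Open Scope group_scope.
Set Implicit Arguments. Unset Strict Implicit.

Lemma mem_odd_order_sqr (gT : finGroupType) (H : {group gT}) (x : gT) :
  odd #[x] -> x ^+ 2 \in H -> x \in H.
Proof.
move=> oddx x2H.
have -> : x = (x ^+ 2) ^+ #[x].+1./2.
  rewrite -expgM mulnC muln2 halfK /= oddx subn0.
  by rewrite expgS expg_order mulg1.
exact: groupX.
Qed.

Section SymmetricTransversal.

Variables (gT : finGroupType) (G H : {group gT}) (C : {set gT}).
Hypotheses (sCG : C \subset G) (CV : {in C, forall c, c^-1 \in C}).
Hypothesis transC : {in G, forall x, #|C :&: x *: H| = 1%N}.

Lemma symtrans_uniq x c d :
  x \in G -> c \in C -> d \in C -> c \in x *: H -> d \in x *: H -> c = d.
Proof.
move=> xG Cc Cd cxH dxH; have /eqP/cards1P[a aE] := transC xG.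
have : c \in C :&: x *: H by rewrite inE Cc.
have : d \in C :&: x *: H by rewrite inE Cd.
by rewrite aE !inE => /eqP-> /eqP->.
Qed.

Lemma symtrans_exists x : x \in G -> exists2 c, c \in C & c \in x *: H.
Proof.
move=> xG; have /eqP/cards1P[a aE] := transC xG.
have : a \in C :&: x *: H by rewrite aE set11.
by case/setIP; exists a.
Qed.

Lemma ssg_adjE x y :
  ssg_adj H x y = [&& x != y, y != x^-1 & y \in x^-1 *: H].
Proof.
rewrite /ssg_adj !inE mem_lcoset invgK; congr [&& _, _ & _].
by rewrite -(inj_eq (mulgI x^-1)) mulKg mulg1 eq_sym.
Qed.

Lemma symtrans_independent x y : x \in C -> y \in C -> ~~ ssg_adj H x y.
Proof.
move=> Cx Cy; rewrite ssg_adjE; apply/and3P => -[_ /eqP yx yxH]; apply: yx.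
have xVG : x^-1 \in G by rewrite groupV (subsetP sCG).
exact: symtrans_uniq xVG Cy (CV Cx) yxH (lcoset_refl _ _).
Qed.

Lemma symtrans_neighbour x :
  x \in G -> x \notin C -> #|[set c in C | ssg_adj H x c]| = 1%N.
Proof.
move=> xG nCx; have [c Cc cxH] := symtrans_exists (groupVr xG).
have cx : c != x by apply: contraNneq nCx => <-.
have cxV : c != x^-1 by apply: contraNneq nCx => cxE; rewrite -[x]invgK -cxE CV.
apply/eqP/cards1P; exists c; apply/setP => d; rewrite !inE ssg_adjE.
apply/idP/eqP => [/andP[Cd /and3P[_ _ dxH]] | ->]; last by rewrite Cc eq_sym cx cxV.
by apply: (symtrans_uniq (groupVr xG)).
Qed.

Lemma symtrans_perfect_code : perfect_code G (ssg_adj H) C.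
Proof.
split=> //; [exact: symtrans_independent | exact: symtrans_neighbour].
Qed.

End SymmetricTransversal.

Section OddQuotient.

Variables (gT : finGroupType) (G H : {group gT}).
Hypotheses (nsHG : H <| G) (sqrG : {in G, forall x, x ^+ 2 \in H -> x \in H}).

Let nHG x : x \in G -> x \in 'N(H) := subsetP (normal_norm nsHG) x.

Lemma lcoset_memG x y : x \in G -> y \in x *: H -> y \in G.
Proof.
by move=> xG /lcosetP[h hH ->]; rewrite groupM // (subsetP (normal_sub nsHG)).
Qed.

Lemma memV_lcoset_norm x y : x \in 'N(H) -> (y^-1 \in x^-1 *: H) = (y \in x *: H).
Proof. by move=> nHx; rewrite memV_lcosetV norm_rlcoset. Qed.

Definition coset_pair x := x *: H :|: x^-1 *: H.
Definition pair_rep x := repr (coset_pair x).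
Definition sym_transversal := [set x in G | pair_rep x \in [set x; x^-1]].

Lemma coset_pairV x : coset_pair x^-1 = coset_pair x.
Proof. by rewrite /coset_pair invgK setUC. Qed.

Lemma coset_pair_eq x y :
  x \in G -> y \in coset_pair x -> coset_pair y = coset_pair x.
Proof.
have lcosetV_eq z : z \in G -> y \in z *: H -> y^-1 *: H = z^-1 *: H.
  by move=> zG yzH; apply/lcoset_eqP; rewrite memV_lcoset_norm ?nHG.
move=> xG /setUP[] yxH; rewrite /coset_pair (lcoset_eqP yxH).
  by rewrite (lcosetV_eq x).
by rewrite (lcosetV_eq x^-1) ?groupV // invgK setUC.
Qed.

Lemma pair_rep_eq x y : x \in G -> y \in coset_pair x -> pair_rep y = pair_rep x.
Proof. by move=> xG yx; rewrite /pair_rep (coset_pair_eq xG yx). Qed.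

Lemma pair_rep_mem x : pair_rep x \in coset_pair x.
Proof. by apply: (mem_repr x); rewrite inE lcoset_refl. Qed.

Lemma pair_rep_group x : x \in H -> pair_rep x = 1.
Proof.
by move=> xH; rewrite /pair_rep /coset_pair !lcoset_id ?groupV // setUid repr_group.
Qed.

Lemma pair_repV_lcoset x :
  x \in G -> pair_rep x \in x *: H -> (pair_rep x)^-1 \in x *: H ->
  (pair_rep x)^-1 = pair_rep x.
Proof.
move=> xG pxH pVxH; have pG := lcoset_memG xG pxH.
have pVpH : (pair_rep x)^-1 \in pair_rep x *: H.
  by apply: lcoset_trans pVxH _; rewrite lcoset_sym.
have pH : pair_rep x \in H.
  by apply: sqrG; rewrite // expg2 -[_ * _]invgK invMg groupV -mem_lcoset.
have xH : x \in H by rewrite -(lcoset_id pH) lcoset_sym.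
by rewrite pair_rep_group // invg1.
Qed.

Lemma sym_transversal_sub : sym_transversal \subset G.
Proof. by apply/subsetP => x; rewrite inE => /andP[]. Qed.

Lemma mem_sym_transversal x y :
  x \in G -> y \in x *: H ->
  (y \in sym_transversal) = (pair_rep x \in [set y; y^-1]).
Proof.
move=> xG yxH; rewrite inE (lcoset_memG xG yxH) (pair_rep_eq xG) //.
by rewrite inE yxH.
Qed.

Lemma sym_transversalV : {in sym_transversal, forall c, c^-1 \in sym_transversal}.
Proof. by move=> c; rewrite !inE groupV /pair_rep coset_pairV invgK orbC. Qed.

Lemma card_sym_transversal_lcoset x :
  x \in G -> #|sym_transversal :&: x *: H| = 1%N.
Proof.
move=> xG; apply/eqP/cards1P.
have [pxH | pxH] := boolP (pair_rep x \in x *: H).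
  exists (pair_rep x); apply/setP => y; rewrite in_setI in_set1.
  apply/andP/eqP => [[+ yxH] | ->].
    rewrite (mem_sym_transversal xG yxH) !inE => /orP[]/eqP py; first by [].
    by rewrite -[y]invgK -py pair_repV_lcoset // py invgK.
  by rewrite pxH (mem_sym_transversal xG pxH) !inE eqxx.
have pVxH : (pair_rep x)^-1 \in x *: H.
  rewrite -memV_lcoset_norm ?nHG ?groupV // !invgK.
  by have /setUP[] := pair_rep_mem x; first rewrite (negPf pxH).
exists (pair_rep x)^-1; apply/setP => y; rewrite in_setI in_set1.
apply/andP/eqP => [[+ yxH] | ->].
  rewrite (mem_sym_transversal xG yxH) !inE => /orP[]/eqP py.
    by rewrite py yxH in pxH.
  by rewrite py invgK.
by rewrite pVxH (mem_sym_transversal xG pVxH) !inE invgK eqxx orbT.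
Qed.

End OddQuotient.

Theorem corollary3p3 (gT : finGroupType) (G H : {group gT}) :
  odd #|G| -> H <| G ->
  exists C : {set gT}, perfect_code G (ssg_adj H) C.
Proof.
move=> oddG nsHG.
have sqrG : {in G, forall x, x ^+ 2 \in H -> x \in H}.
  by move=> x xG; apply: mem_odd_order_sqr; apply: dvdn_odd (order_dvdG xG) oddG.
exists (sym_transversal G H); apply: symtrans_perfect_code.
- exact: sym_transversal_sub.
- exact: sym_transversalV.
- exact: card_sym_transversal_lcoset.
Qed.
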